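(* Assume there is $\eta\in(0,1]$ with $O(o\mid s,a)\ge \eta$ for all $o\in\mathcal O$, $s\in\mathcal S$, $a\in\mathcal A$. Then for every fixed action $a\in\mathcal A$ and all beliefs $b,b'\in\Delta(\mathcal S)$ with $b(s^\star)>0$ and $b'(s^\star)>0$, $$\big|\mathcal I(b,a)-\mathcal I(b',a)\big|\le \frac{1}{\eta}\,\|b-b'\|_1 .$$ Consequently, for every probability distribution $q$ on $\mathcal A$, $$\Big|\mathbb E_{a\sim q}\mathcal I(b,a)-\mathbb E_{a\sim q}\mathcal I(b',a)\Big|\le \frac1\eta\,\|b-b'\|_1 .$$
   Context: $\mathcal S,\mathcal A,\mathcal O$ are finite sets (latent states, actions, observations); $s^\star\in\mathcal S$ is a fixed true latent state; $O(o\mid s,a)$ is an observation kernel (for each $s,a$, a probability distribution over $o\in\mathcal O$). $\Delta(\mathcal S)$ is the probability simplex over $\mathcal S$ and $\|b-b'\|_1=\sum_{s}|b(s)-b'(s)|$. The Bayes-normalizer is $p_b(o\mid a)=\sum_{s'\in\mathcal S}O(o\mid s',a)\,b(s')$ and the oracle (Bayesian) belief update is $B^\star(b,a,o)(s)=O(o\mid s,a)\,b(s)/p_b(o\mid a)$. The truth-anchored potential is $\Psi(b)=-\log b(s^\star)\in[0,\infty]$. The one-step informativeness of action $a$ at belief $b$ is $\mathcal I(b,a)=\Psi(b)-\mathbb E_{o\sim O(\cdot\mid s^\star,a)}\big[\Psi(B^\star(b,a,o))\big]$. *)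

From HB Require Import structures.
From mathcomp Require Import all_boot all_order all_algebra.
From mathcomp Require Import all_classical all_reals all_analysis.
Set Implicit Arguments. Unset Strict Implicit. Unset Printing Implicit Defensive.
Import Order.TTheory GRing.Theory Num.Theory.
Local Open Scope ring_scope.

Section Defs.
Variables (R : realType) (S A O : finType).

Definition is_belief (b : S -> R) : Prop :=
  (forall s, 0 <= b s) /\ \sum_(s : S) b s = 1.

Definition is_dist_A (q : A -> R) : Prop :=
  (forall a, 0 <= q a) /\ \sum_(a : A) q a = 1.

Definition is_obs_kernel (Obs : O -> S -> A -> R) : Prop :=
  forall s a, (forall o, 0 <= Obs o s a) /\ \sum_(o : O) Obs o s a = 1.

Definition p_norm (Obs : O -> S -> A -> R) (b : S -> R) (a : A) (o : O) : R :=
  \sum_(s' : S) Obs o s' a * b s'.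

Definition bayes_update (Obs : O -> S -> A -> R) (b : S -> R) (a : A) (o : O)
  : S -> R :=
  fun s => Obs o s a * b s / p_norm Obs b a o.

Definition l1_dist (b b' : S -> R) : R := \sum_(s : S) `|b s - b' s|.

Definition Psi (sstar : S) (b : S -> R) : R := - ln (b sstar).

Definition informativeness (Obs : O -> S -> A -> R) (sstar : S)
  (b : S -> R) (a : A) : R :=
  Psi sstar b - \sum_(o : O) Obs o sstar a * Psi sstar (bayes_update Obs b a o).

End Defs.

(* On [eta, +oo) the logarithm is (1/eta)-Lipschitz, and every Bayes
   normalizer p_b(o|a), a mixture of observation probabilities >= eta, lies
   there. The term ln b(s_star) cancels from I(b,a), leaving
   I(b,a) = sum_o O(o|s_star,a) ln O(o|s_star,a) - sum_o O(o|s_star,a) ln p_b(o|a).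
   Hence |I(b,a) - I(b',a)| <= (1/eta) sum_o |p_b(o|a) - p_b'(o|a)|, and the
   observation kernel, being a Markov kernel, contracts the L1 distance. *)
From HB Require Import structures.
From mathcomp Require Import all_boot all_order all_algebra.
From mathcomp Require Import all_classical all_reals all_analysis.
From mathcomp Require Import lra.
Import Order.TTheory GRing.Theory Num.Theory.
Local Open Scope ring_scope.

Set Implicit Arguments.
Unset Strict Implicit.

Section LnLipschitz.
Variables (R : realType) (eta : R).
Hypothesis eta_gt0 : 0 < eta.

Lemma ln_subr_le (x y : R) : eta <= x -> eta <= y -> ln x - ln y <= `|x - y| / eta.
Proof.
move=> etax etay.
have x_gt0 : 0 < x by exact: lt_le_trans etax.
have y_gt0 : 0 < y by exact: lt_le_trans etay.
rewrite -ln_div ?posrE // -[x / y](addrNK 1) addrC.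
apply: le_trans (le_ln1Dx _) _; first by rewrite -subr_gt0 opprK subrK divr_gt0.
have -> : x / y - 1 = (x - y) / y by rewrite mulrBl divff ?gt_eqF.
apply: le_trans (ler_norm _) _.
rewrite normrM normfV (gtr0_norm y_gt0) ler_wpM2l ?normr_ge0 //.
by rewrite lef_pV2 ?posrE.
Qed.

Lemma ln_lipschitz (x y : R) : eta <= x -> eta <= y -> `|ln x - ln y| <= `|x - y| / eta.
Proof.
move=> etax etay; rewrite ler_norml ln_subr_le // andbT.
by rewrite lerNl opprB distrC ln_subr_le.
Qed.

End LnLipschitz.

Lemma ler_norm_wsumB (R : realDomainType) (I : finType) (w x y : I -> R) :
  (forall i, 0 <= w i) ->
  `|\sum_i w i * x i - \sum_i w i * y i| <= \sum_i w i * `|x i - y i|.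
Proof.
move=> w_ge0; rewrite -sumrB; apply: le_trans (ler_norm_sum _ _ _) _.
by apply: ler_sum => i _; rewrite -mulrBr normrM ger0_norm.
Qed.

Lemma convex_comb_le (R : realDomainType) (I : finType) (w x : I -> R) (c : R) :
  (forall i, 0 <= w i) -> \sum_i w i = 1 -> (forall i, x i <= c) ->
  \sum_i w i * x i <= c.
Proof.
move=> w_ge0 w_sum1 x_le; rewrite -[leRHS]mul1r -w_sum1 mulr_suml.
by apply: ler_sum => i _; rewrite ler_wpM2l.
Qed.

Section BayesNormalizer.
Variables (R : realType) (S A O : finType) (Obs : O -> S -> A -> R).
Hypothesis Obs_kernel : is_obs_kernel Obs.

Lemma obs_le1 o s a : Obs o s a <= 1.
Proof.
have [Obs_ge0 Obs_sum1] := Obs_kernel s a.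
by rewrite -Obs_sum1 (bigD1 o) //= lerDl sumr_ge0.
Qed.

Lemma p_norm_ge (eta : R) b a o :
  (forall s, eta <= Obs o s a) -> is_belief b -> eta <= p_norm Obs b a o.
Proof.
move=> eta_le [b_ge0 b_sum1].
by rewrite -[eta]mulr1 -b_sum1 mulr_sumr; apply: ler_sum => s _; rewrite ler_wpM2r.
Qed.

Lemma l1_p_norm_le b b' a :
  \sum_o `|p_norm Obs b a o - p_norm Obs b' a o| <= l1_dist b b'.
Proof.
apply: (@le_trans _ _ (\sum_o \sum_s Obs o s a * `|b s - b' s|)).
  by apply: ler_sum => o _; apply: ler_norm_wsumB => s; case: (Obs_kernel s a).
rewrite exchange_big /=; apply: ler_sum => s _.
by rewrite -mulr_suml; case: (Obs_kernel s a) => _ ->; rewrite mul1r.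
Qed.

End BayesNormalizer.

Section Informativeness.
Variables (R : realType) (S A O : finType) (sstar : S) (Obs : O -> S -> A -> R).
Variables (eta : R) (a : A).
Hypothesis Obs_kernel : is_obs_kernel Obs.
Hypothesis eta_gt0 : 0 < eta.
Hypothesis eta_le_Obs : forall o s a', eta <= Obs o s a'.

Lemma informativenessE b : is_belief b -> 0 < b sstar ->
  informativeness Obs sstar b a =
  \sum_o Obs o sstar a * ln (Obs o sstar a)
  - \sum_o Obs o sstar a * ln (p_norm Obs b a o).
Proof.
move=> b_belief b_sstar_gt0; have [_ Obs_sum1] := Obs_kernel sstar a.
have split_term o : Obs o sstar a * Psi sstar (bayes_update Obs b a o) =
    Obs o sstar a * ln (p_norm Obs b a o) - Obs o sstar a * ln (Obs o sstar a)
    - Obs o sstar a * ln (b sstar).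
  have p_gt0 : 0 < p_norm Obs b a o.
    exact: lt_le_trans (p_norm_ge (fun s => eta_le_Obs o s a) b_belief).
  have Obs_gt0 : 0 < Obs o sstar a by exact: lt_le_trans (eta_le_Obs _ _ _).
  rewrite /Psi /bayes_update ln_div ?posrE ?mulr_gt0 // lnM ?posrE //; lra.
rewrite /informativeness (eq_bigr _ (fun o _ => split_term o)) !sumrB.
rewrite -mulr_suml Obs_sum1 mul1r /Psi; lra.
Qed.

Lemma informativeness_lipschitz b b' :
  is_belief b -> is_belief b' -> 0 < b sstar -> 0 < b' sstar ->
  `|informativeness Obs sstar b a - informativeness Obs sstar b' a|
    <= eta^-1 * l1_dist b b'.
Proof.
move=> b_belief b'_belief b_pos b'_pos.
rewrite !informativenessE // opprB addrC addrA subrK.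
have Obs_ge0 o : 0 <= Obs o sstar a by case: (Obs_kernel sstar a).
apply: le_trans (ler_norm_wsumB _ _ Obs_ge0) _.
apply: (@le_trans _ _ ((\sum_o `|p_norm Obs b a o - p_norm Obs b' a o|) / eta)).
  rewrite mulr_suml; apply: ler_sum => o _.
  rewrite distrC -[leRHS]mul1r ler_pM ?obs_le1 //.
  by apply: ln_lipschitz; rewrite // p_norm_ge.
by rewrite mulrC ler_wpM2l ?invr_ge0 ?(ltW eta_gt0) //; exact: l1_p_norm_le.
Qed.

End Informativeness.

Theorem mainTheorem1 (R : realType) (S A O : finType) (sstar : S)
  (Obs : O -> S -> A -> R) (eta : R) :
  is_obs_kernel Obs ->
  0 < eta -> eta <= 1 ->
  (forall o s a, eta <= Obs o s a) ->
  (forall (a : A) (b b' : S -> R),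
      is_belief b -> is_belief b' -> 0 < b sstar -> 0 < b' sstar ->
      `|informativeness Obs sstar b a - informativeness Obs sstar b' a|
        <= eta^-1 * l1_dist b b')
  /\
  (forall (q : A -> R) (b b' : S -> R),
      is_dist_A q ->
      is_belief b -> is_belief b' -> 0 < b sstar -> 0 < b' sstar ->
      `|\sum_(a : A) q a * informativeness Obs sstar b a
        - \sum_(a : A) q a * informativeness Obs sstar b' a|
        <= eta^-1 * l1_dist b b').
Proof.
move=> Obs_kernel eta_gt0 _ eta_le_Obs.
have lip a := informativeness_lipschitz (sstar := sstar) a Obs_kernel eta_gt0 eta_le_Obs.
split=> // q b b' [q_ge0 q_sum1] b_belief b'_belief b_pos b'_pos.
have avg_le :=
  convex_comb_le q_ge0 q_sum1 (fun a => lip a b b' b_belief b'_belief b_pos b'_pos).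
exact: le_trans (ler_norm_wsumB _ _ q_ge0) avg_le.
Qed.
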